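(* For $n\ge2$ and all $P,Q\in\Gamma_n$, $D_{Th}(P\|Q)\le 3D_{Jh}(P\|Q)$.
   Context: $\Gamma_n=\{P=(p_1,\dots,p_n): p_i>0,\ \sum p_i=1\}$. $h(P\|Q)=\frac12\sum_{i=1}^n(\sqrt{p_i}-\sqrt{q_i})^2$; $J(P\|Q)=\sum_{i=1}^n(p_i-q_i)\ln\frac{p_i}{q_i}$; $T(P\|Q)=\sum_{i=1}^n\frac{p_i+q_i}{2}\ln\frac{p_i+q_i}{2\sqrt{p_iq_i}}$. $D_{Th}=T-h$, $D_{Jh}=\frac18J-h$. *)

From Stdlib Require Import Reals List.
Open Scope R_scope.

Definition sumn (n : nat) (f : nat -> R) : R :=
  fold_right Rplus 0 (map f (seq 0 n)).

Definition Gamma (n : nat) (p : nat -> R) : Prop :=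
  (forall i, (i < n)%nat -> 0 < p i) /\ sumn n p = 1.

Definition hellinger (n : nat) (p q : nat -> R) : R :=
  / 2 * sumn n (fun i => (sqrt (p i) - sqrt (q i)) ^ 2).

Definition Jdiv (n : nat) (p q : nat -> R) : R :=
  sumn n (fun i => (p i - q i) * ln (p i / q i)).

Definition Tdiv (n : nat) (p q : nat -> R) : R :=
  sumn n (fun i => (p i + q i) / 2 * ln ((p i + q i) / (2 * sqrt (p i * q i)))).

Definition D_Th (n : nat) (p q : nat -> R) : R := Tdiv n p q - hellinger n p q.
Definition D_Jh (n : nat) (p q : nat -> R) : R := / 8 * Jdiv n p q - hellinger n p q.

(* Since [2 h] is the sum of the [(sqrt p_i - sqrt q_i)^2], the inequality [T - h <= 3 (J/8 - h)]
   reads [T + 2 h <= 3/8 J], and it already holds term by term for arbitrary positive [a = p_i],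
   [b = q_i].  Scaling by [b] and
   putting [t = sqrt (a / b) >= 1] leaves a one-variable inequality, proved by bounding [ln t]
   below by a truncated artanh series and, for [t <= 3], [ln (1 + u)] above by a Pade
   approximant (for [t >= 3] the artanh bound is used once more on [2 t^2 / (t^2 + 1)]); in both
   ranges the gap left is an explicitly nonnegative rational function. *)

From Stdlib Require Import Reals Lra Psatz List.
From Coquelicot Require Import Coquelicot.
Open Scope R_scope.

Lemma nondecr_of_is_derive_nonneg (f df : R -> R) (a b : R) : a <= b ->
  (forall x, a <= x <= b -> is_derive f x (df x)) ->
  (forall x, a <= x <= b -> 0 <= df x) -> f a <= f b.
Proof.
  intros Hab Hderiv Hpos.
  destruct (MVT_gen f a b df) as [c [Hc Hmvt]];
    rewrite ?Rmin_left, ?Rmax_right in * by lra.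
  - intros x Hx. apply Hderiv. lra.
  - intros x Hx. apply derivable_continuous_pt. exists (df x).
    apply is_derive_Reals, Hderiv. lra.
  - assert (0 <= df c * (b - a)) by (apply Rmult_le_pos; [apply Hpos|]; lra).
    lra.
Qed.

Lemma div_nonneg (x y : R) : 0 <= x -> 0 < y -> 0 <= x / y.
Proof.
  intros Hx Hy. apply Rmult_le_pos; [exact Hx | apply Rlt_le, Rinv_0_lt_compat, Hy].
Qed.

Lemma pow6_ge_0 (x : R) : 0 <= x ^ 6.
Proof. replace (x ^ 6) with ((x ^ 3) ^ 2) by ring. apply pow2_ge_0. Qed.

Definition atanh_series5 (v : R) : R := v + v ^ 3 / 3 + v ^ 5 / 5.

(* [ln y = 2 artanh ((y - 1) / (y + 1))]; the dropped tail of the artanh series is nonnegative. *)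
Lemma ln_ge_atanh_series5 (y : R) : 1 <= y -> 2 * atanh_series5 ((y - 1) / (y + 1)) <= ln y.
Proof.
  intros Hy.
  assert (Hmono := nondecr_of_is_derive_nonneg
    (fun x => ln x - 2 * atanh_series5 ((x - 1) / (x + 1)))
    (fun x => ((x - 1) / (x + 1)) ^ 6 / x) 1 y Hy).
  cbv beta in Hmono. rewrite ln_1 in Hmono.
  replace (atanh_series5 ((1 - 1) / (1 + 1))) with 0 in Hmono
    by (unfold atanh_series5; field).
  enough (0 <= ln y - 2 * atanh_series5 ((y - 1) / (y + 1))) by lra.
  replace 0 with (0 - 2 * 0) by ring. apply Hmono.
  - intros x Hx. unfold atanh_series5. auto_derive; [lra | field; lra].
  - intros x Hx. apply div_nonneg; [apply pow6_ge_0 | lra].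
Qed.

Lemma ln_1p_le_pade (u : R) : 0 <= u -> ln (1 + u) <= u * (6 + u) / (6 + 4 * u).
Proof.
  intros Hu.
  assert (Hmono := nondecr_of_is_derive_nonneg
    (fun x => x * (6 + x) / (6 + 4 * x) - ln (1 + x))
    (fun x => 4 * x ^ 3 / ((6 + 4 * x) ^ 2 * (1 + x))) 0 u Hu).
  cbv beta in Hmono. replace (1 + 0) with 1 in Hmono by ring. rewrite ln_1 in Hmono.
  enough (0 <= u * (6 + u) / (6 + 4 * u) - ln (1 + u)) by lra.
  replace 0 with (0 * (6 + 0) / (6 + 4 * 0) - 0) by field. apply Hmono.
  - intros x Hx. auto_derive; [lra | field; lra].
  - intros x Hx. apply div_nonneg.
    + assert (0 <= x ^ 3) by (apply pow_le; lra). lra.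
    + apply Rmult_lt_0_compat; [apply pow_lt|]; lra.
Qed.

Lemma ratio_bound_le3 (t : R) : 1 <= t <= 3 ->
  (t ^ 2 + 1) / 2 * ln ((t ^ 2 + 1) / (2 * t)) + (t - 1) ^ 2 <= 3 / 4 * (t ^ 2 - 1) * ln t.
Proof.
  intros Ht.
  assert (Hu : 0 <= (t - 1) ^ 2 / (2 * t)) by (apply div_nonneg; [apply pow2_ge_0 | lra]).
  replace ((t ^ 2 + 1) / (2 * t)) with (1 + (t - 1) ^ 2 / (2 * t)) by (field; lra).
  set (u := (t - 1) ^ 2 / (2 * t)) in *.
  assert (Hlnu : (t ^ 2 + 1) / 2 * ln (1 + u) <= (t ^ 2 + 1) / 2 * (u * (6 + u) / (6 + 4 * u)))
    by (apply Rmult_le_compat_l; [nra | apply ln_1p_le_pade, Hu]).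
  assert (Hlnt : 3 / 4 * (t ^ 2 - 1) * (2 * atanh_series5 ((t - 1) / (t + 1)))
                 <= 3 / 4 * (t ^ 2 - 1) * ln t)
    by (apply Rmult_le_compat_l; [nra | apply ln_ge_atanh_series5; lra]).
  enough (0 <= 3 / 4 * (t ^ 2 - 1) * (2 * atanh_series5 ((t - 1) / (t + 1)))
               - ((t ^ 2 + 1) / 2 * (u * (6 + u) / (6 + 4 * u)) + (t - 1) ^ 2)) by lra.
  (* With [w = t - 1] in [[0, 2]], the gap is [w^6] times a quintic that stays positive there. *)
  replace (3 / 4 * (t ^ 2 - 1) * (2 * atanh_series5 ((t - 1) / (t + 1)))
           - ((t ^ 2 + 1) / 2 * (u * (6 + u) / (6 + 4 * u)) + (t - 1) ^ 2))
    with ((t - 1) ^ 6 * (96 + 240 * (t - 1) + 174 * (t - 1) ^ 2 + 21 * (t - 1) ^ 3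
                         - 24 * (t - 1) ^ 4 - 15 / 2 * (t - 1) ^ 5)
          / (120 * t * (t ^ 2 + t + 1) * (t + 1) ^ 5))
    by (unfold atanh_series5, u; field; repeat split; nra).
  assert (Hw : 0 <= t - 1 <= 2) by lra.
  set (w := t - 1) in *. clearbody w.
  apply div_nonneg.
  - apply Rmult_le_pos; [apply pow6_ge_0|].
    assert (0 <= w ^ 2) by apply pow2_ge_0.
    assert (w ^ 3 <= 2 * w ^ 2) by (simpl; nra).
    assert (w ^ 4 <= 2 * w ^ 3) by (simpl; nra).
    assert (w ^ 5 <= 2 * w ^ 4) by (simpl; nra).
    nra.
  - assert (0 < (t + 1) ^ 5) by (apply pow_lt; lra).
    assert (0 < t ^ 2 + t + 1) by nra.
    apply Rmult_lt_0_compat; [|assumption]. nra.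
Qed.

Lemma ratio_bound_ge3 (t : R) : 3 <= t ->
  (t ^ 2 + 1) / 2 * ln ((t ^ 2 + 1) / (2 * t)) + (t - 1) ^ 2 <= 3 / 4 * (t ^ 2 - 1) * ln t.
Proof.
  intros Ht.
  assert (Hy : 1 <= 2 * t ^ 2 / (t ^ 2 + 1))
    by (apply Rmult_le_reg_r with (t ^ 2 + 1); [nra | field_simplify; nra]).
  replace ((t ^ 2 + 1) / (2 * t)) with (t / (2 * t ^ 2 / (t ^ 2 + 1))) by (field; nra).
  rewrite ln_div by lra.
  set (y := 2 * t ^ 2 / (t ^ 2 + 1)) in *.
  assert (Hlny : (t ^ 2 + 1) / 2 * (ln t - ln y)
                 <= (t ^ 2 + 1) / 2 * (ln t - 2 * atanh_series5 ((y - 1) / (y + 1))))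
    by (apply Rmult_le_compat_l; [nra | apply ln_ge_atanh_series5 in Hy; lra]).
  assert (Hlnt : (t ^ 2 - 5) / 4 * (2 * atanh_series5 ((t - 1) / (t + 1)))
                 <= (t ^ 2 - 5) / 4 * ln t)
    by (apply Rmult_le_compat_l; [nra | apply ln_ge_atanh_series5; lra]).
  replace ((y - 1) / (y + 1)) with ((t ^ 2 - 1) / (3 * t ^ 2 + 1)) in Hlny
    by (unfold y; field; nra).
  enough (0 <= (t ^ 2 - 5) / 4 * (2 * atanh_series5 ((t - 1) / (t + 1)))
               + (t ^ 2 + 1) / 2 * (2 * atanh_series5 ((t ^ 2 - 1) / (3 * t ^ 2 + 1)))
               - (t - 1) ^ 2) by lra.
  (* Expanded in [w = t - 3 >= 0], the numerator of the remaining gap has only positive coefficients. *)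
  replace ((t ^ 2 - 5) / 4 * (2 * atanh_series5 ((t - 1) / (t + 1)))
           + (t ^ 2 + 1) / 2 * (2 * atanh_series5 ((t ^ 2 - 1) / (3 * t ^ 2 + 1)))
           - (t - 1) ^ 2)
    with (let w := t - 3 in
          (36511678464 + w * (235160862720 + w * (710533447680 + w * (1337661194240
           + w * (1757456465920 + w * (1710105542656 + w * (1276222967808
           + w * (746130782208 + w * (345976545280 + w * (127967385600
           + w * (37754589696 + w * (8834308864 + w * (1619334784 + w * (227625920
           + w * (23693520 + w * (1720632 + w * (77820 + w * 1650)))))))))))))))))
          / (60 * (t + 1) ^ 5 * (3 * t ^ 2 + 1) ^ 5))
    by (unfold atanh_series5; cbv zeta; field; repeat split; nra).
  assert (Hw : 0 <= t - 3) by lra.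
  cbv zeta. set (w := t - 3) in *. clearbody w.
  apply div_nonneg.
  - repeat (apply Rplus_le_le_0_compat || apply Rmult_le_pos); lra.
  - assert (0 < (t + 1) ^ 5) by (apply pow_lt; lra).
    assert (0 < (3 * t ^ 2 + 1) ^ 5) by (apply pow_lt; nra).
    apply Rmult_lt_0_compat; [apply Rmult_lt_0_compat|]; lra.
Qed.

Lemma ratio_bound (t : R) : 1 <= t ->
  (t ^ 2 + 1) / 2 * ln ((t ^ 2 + 1) / (2 * t)) + (t - 1) ^ 2 <= 3 / 4 * (t ^ 2 - 1) * ln t.
Proof.
  intros Ht. destruct (Rle_lt_dec t 3).
  - apply ratio_bound_le3; lra.
  - apply ratio_bound_ge3; lra.
Qed.

Lemma pair_bound_sqr (x y : R) : 0 < y <= x ->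
  (x ^ 2 + y ^ 2) / 2 * ln ((x ^ 2 + y ^ 2) / (2 * (x * y))) + (x - y) ^ 2
  <= 3 / 8 * ((x ^ 2 - y ^ 2) * ln (x ^ 2 / y ^ 2)).
Proof.
  intros Hxy.
  assert (Ht : 1 <= x / y)
    by (apply Rmult_le_reg_r with y; [lra | field_simplify; lra]).
  replace ((x ^ 2 + y ^ 2) / (2 * (x * y))) with (((x / y) ^ 2 + 1) / (2 * (x / y)))
    by (field; lra).
  replace (x ^ 2 / y ^ 2) with ((x / y) * (x / y)) by (field; lra).
  rewrite ln_mult by (apply Rlt_le_trans with 1; lra).
  assert (Hscaled := Rmult_le_compat_l (y ^ 2) _ _ (pow2_ge_0 y) (ratio_bound (x / y) Ht)).
  replace ((x ^ 2 + y ^ 2) / 2) with (y ^ 2 * (((x / y) ^ 2 + 1) / 2)) by (field; lra).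
  replace ((x - y) ^ 2) with (y ^ 2 * ((x / y - 1) ^ 2)) by (field; lra).
  replace (x ^ 2 - y ^ 2) with (y ^ 2 * ((x / y) ^ 2 - 1)) by (field; lra).
  lra.
Qed.

Lemma pair_bound (a b : R) : 0 < a -> 0 < b ->
  (a + b) / 2 * ln ((a + b) / (2 * sqrt (a * b))) + (sqrt a - sqrt b) ^ 2
  <= 3 / 8 * ((a - b) * ln (a / b)).
Proof.
  intros Ha Hb.
  rewrite sqrt_mult by lra.
  assert (Ea := pow2_sqrt a ltac:(lra)). assert (Eb := pow2_sqrt b ltac:(lra)).
  assert (Hx : 0 < sqrt a) by (apply sqrt_lt_R0, Ha).
  assert (Hy : 0 < sqrt b) by (apply sqrt_lt_R0, Hb).
  set (x := sqrt a) in *. set (y := sqrt b) in *. clearbody x y. subst a b.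
  destruct (Rle_lt_dec y x).
  - apply pair_bound_sqr; lra.
  - assert (Hswap := pair_bound_sqr y x ltac:(lra)).
    rewrite (ln_div (x ^ 2)) by (apply pow_lt; lra).
    rewrite (ln_div (y ^ 2)) in Hswap by (apply pow_lt; lra).
    replace (x ^ 2 + y ^ 2) with (y ^ 2 + x ^ 2) by ring.
    replace (x * y) with (y * x) by ring.
    replace ((x - y) ^ 2) with ((y - x) ^ 2) by ring.
    lra.
Qed.

Lemma sumn_S (n : nat) (f : nat -> R) : sumn (S n) f = sumn n f + f n.
Proof.
  unfold sumn. rewrite seq_S, map_app, fold_right_app. simpl.
  induction (map f (seq 0 n)) as [|a l IH]; simpl; [| rewrite IH]; ring.
Qed.

Lemma sumn_plus (n : nat) (f g : nat -> R) :
  sumn n (fun i => f i + g i) = sumn n f + sumn n g.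
Proof. induction n as [|n IH]; [unfold sumn; simpl; ring | rewrite !sumn_S, IH; ring]. Qed.

Lemma sumn_scal (n : nat) (c : R) (f : nat -> R) :
  sumn n (fun i => c * f i) = c * sumn n f.
Proof. induction n as [|n IH]; [unfold sumn; simpl; ring | rewrite !sumn_S, IH; ring]. Qed.

Lemma sumn_le (n : nat) (f g : nat -> R) :
  (forall i, (i < n)%nat -> f i <= g i) -> sumn n f <= sumn n g.
Proof.
  induction n as [|n IH]; intros Hle.
  - unfold sumn. simpl. lra.
  - rewrite !sumn_S. apply Rplus_le_compat; [apply IH; intros; apply Hle | apply Hle]; lia.
Qed.

Theorem proposition5p8 (n : nat) (p q : nat -> R) :
  (2 <= n)%nat -> Gamma n p -> Gamma n q ->
  D_Th n p q <= 3 * D_Jh n p q.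
Proof.
  intros _ [Hp _] [Hq _].
  assert (Hsum := sumn_le n _ _ (fun i Hi => pair_bound (p i) (q i) (Hp i Hi) (Hq i Hi))).
  rewrite sumn_plus, sumn_scal in Hsum.
  unfold D_Th, D_Jh, Tdiv, Jdiv, hellinger.
  lra.
Qed.
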